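(* Let $\mathcal C_1$ and $\mathcal C_2$ be $C^2$ convex curves with the same endpoints and with $\mathcal C_1$ contained in the convex hull of $\mathcal C_2$. Assume the total curvature of $\mathcal C_2$ satisfies $\int_{\mathcal C_2}\kappa\,ds\le\pi$. Then $$\max_{P\in\mathcal C_2}\kappa_{\mathcal C_2}(P)\ge\min_{Q\in\mathcal C_1}\kappa_{\mathcal C_1}(Q).$$
   Context: Curves are of class $C^2$ with nonvanishing first and second derivative vectors, oriented so that the curvature is positive; $\kappa_{\mathcal C}$ denotes the curvature of $\mathcal C$, $s$ arclength, and $\int_{\mathcal C}\kappa\,ds$ the total curvature (total change of the tangent angle). *)

From Stdlib Require Import Reals.
From Coquelicot Require Import Coquelicot.
Open Scope R_scope.

Record curve := mkCurve { cx : R -> R; cy : R -> R; ca : R; cb : R }.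

Definition pt (c : curve) (t : R) : R * R := (cx c t, cy c t).

Definition in_dom (c : curve) (t : R) : Prop := ca c <= t <= cb c.

Definition trace (c : curve) (p : R * R) : Prop := exists t, in_dom c t /\ pt c t = p.

(* C^2 on the closed parameter interval (via a C^2 function on a neighbourhood
   of each parameter value), with nonvanishing first and second derivative
   vectors, oriented so that the (signed) curvature is positive. *)
Definition C2_curve (c : curve) : Prop :=
  ca c < cb c /\
  forall t, in_dom c t ->
    ex_derive (cx c) t /\ ex_derive (cy c) t /\
    (forall u, ex_derive (cx c) u) /\ (forall u, ex_derive (cy c) u) /\
    ex_derive (Derive (cx c)) t /\ ex_derive (Derive (cy c)) t /\
    (forall u, ex_derive (Derive (cx c)) u) /\ (forall u, ex_derive (Derive (cy c)) u) /\
    continuous (Derive_n (cx c) 2) t /\ continuous (Derive_n (cy c) 2) t.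

Definition dx (c : curve) t := Derive (cx c) t.
Definition dy (c : curve) t := Derive (cy c) t.
Definition ddx (c : curve) t := Derive_n (cx c) 2 t.
Definition ddy (c : curve) t := Derive_n (cy c) 2 t.

Definition curvature (c : curve) (t : R) : R :=
  (dx c t * ddy c t - dy c t * ddx c t) /
  (sqrt (dx c t ^ 2 + dy c t ^ 2)) ^ 3.

Definition regular_pos_curve (c : curve) : Prop :=
  C2_curve c /\
  forall t, in_dom c t ->
    (dx c t, dy c t) <> (0, 0) /\ (ddx c t, ddy c t) <> (0, 0) /\
    0 < curvature c t.

Definition total_curvature (c : curve) : R :=
  RInt (fun t => curvature c t * sqrt (dx c t ^ 2 + dy c t ^ 2)) (ca c) (cb c).

(* Convex curve: every tangent line is a supporting line of the curve
   (the curve lies in the closed half-plane to the left of each tangent,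
   consistently with the positive-curvature orientation). *)
Definition convex_curve (c : curve) : Prop :=
  regular_pos_curve c /\
  forall t u, in_dom c t -> in_dom c u ->
    0 <= dx c t * (cy c u - cy c t) - dy c t * (cx c u - cx c t).

Definition convex_set (K : R * R -> Prop) : Prop :=
  forall p q l, K p -> K q -> 0 <= l <= 1 ->
    K (l * fst p + (1 - l) * fst q, l * snd p + (1 - l) * snd q).

Definition convex_hull (S : R * R -> Prop) (p : R * R) : Prop :=
  forall K, convex_set K -> (forall q, S q -> K q) -> K p.

Definition same_endpoints (c1 c2 : curve) : Prop :=
  (pt c1 (ca c1) = pt c2 (ca c2) /\ pt c1 (cb c1) = pt c2 (cb c2)) \/
  (pt c1 (ca c1) = pt c2 (cb c2) /\ pt c1 (cb c1) = pt c2 (ca c2)).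

Definition is_max_on (c : curve) (f : R -> R) (M : R) : Prop :=
  (exists t, in_dom c t /\ f t = M) /\ (forall t, in_dom c t -> f t <= M).

Definition is_min_on (c : curve) (f : R -> R) (m : R) : Prop :=
  (exists t, in_dom c t /\ f t = m) /\ (forall t, in_dom c t -> m <= f t).

(* Measure directions by their angle from the initial tangent of C2, along which the tangent
   turns monotonically from 0 to Theta <= pi.  Since C1 lies in the convex hull of C2 and has
   the same endpoints A, B, it starts to the left of the initial tangent of C2, ends to the
   left of its final tangent and stays to the left of the reversed chord BA.  Comparing these
   supporting lines with the tangent angle of C1 rules out swapped endpoints and shows that
   the tangent angles of C1 fill a subinterval of [0, Theta]; an extra full turn of C1 is
   excluded by convexity.
   Let e = N(0) - N(Theta) be the difference of the unit normals at the ends of C2.  Along a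
   curve whose tangent angles stay in [0, Theta] we have T.e >= 0 and
   d(T.(T(Theta) - T(0)))/ds = kappa T.e, so integrating (B - A).e = int T.e ds gives
   (B - A).e >= (2 - 2 cos Theta) / max kappa on C2 and (B - A).e <= (2 - 2 cos Theta) / min kappa
   on C1.  As 2 - 2 cos Theta > 0, min kappa on C1 <= max kappa on C2. *)

From Stdlib Require Import Reals Lra.
From Coquelicot Require Import Coquelicot.
Open Scope R_scope.

Lemma is_derive_ge0_at_left_min (f : R -> R) a b l : a < b -> is_derive f a l ->
  (forall x, a <= x <= b -> f a <= f x) -> 0 <= l.
Proof.
  intros Hab Hd Hmin. apply is_derive_Reals in Hd.
  destruct (Rle_lt_dec 0 l) as [|Hl]; [assumption | exfalso].
  destruct (Hd (- l / 2)) as [[d Hd0] Hdd]; [lra|]; simpl in Hdd.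
  set (h := Rmin (d / 2) (b - a)).
  assert (Hh : 0 < h <= b - a /\ h <= d / 2)
    by (unfold h; repeat split; [apply Rmin_pos | apply Rmin_r | apply Rmin_l]; lra).
  assert (Hq : 0 <= (f (a + h) - f a) / h).
  { apply Rdiv_le_0_compat; [|lra]. assert (f a <= f (a + h)) by (apply Hmin; lra). lra. }
  assert (Habs : Rabs ((f (a + h) - f a) / h - l) < - l / 2).
  { apply Hdd; [lra|]. rewrite Rabs_pos_eq; lra. }
  apply Rabs_def2 in Habs. lra.
Qed.

Lemma is_derive_le0_at_right_min (f : R -> R) a b l : a < b -> is_derive f b l ->
  (forall x, a <= x <= b -> f b <= f x) -> l <= 0.
Proof.
  intros Hab Hd Hmin.
  assert (Hreflect : is_derive (fun x => f (- x)) (- b) (- l)).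
  { replace (- l) with (scal (-1) l) by (unfold scal; simpl; unfold mult; simpl; ring).
    apply (is_derive_comp f Ropp); [rewrite Ropp_involutive; exact Hd|].
    auto_derive; [exact I | ring]. }
  enough (0 <= - l) by lra.
  apply (is_derive_ge0_at_left_min (fun x => f (- x)) (- b) (- a)); [lra | exact Hreflect |].
  intros x Hx. rewrite Ropp_involutive. apply Hmin. lra.
Qed.

Lemma is_derive_eq0_at_interior_min (f : R -> R) a c b l : a < c -> c < b ->
  is_derive f c l -> (forall x, a <= x <= b -> f c <= f x) -> l = 0.
Proof.
  intros Hac Hcb Hd Hmin.
  assert (0 <= l) by (apply (is_derive_ge0_at_left_min f c b); auto; intros; apply Hmin; lra).
  assert (l <= 0) by (apply (is_derive_le0_at_right_min f a c); auto; intros; apply Hmin; lra).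
  lra.
Qed.

(* [auto_derive] produces derivatives of eta-expanded functions; this is the form that
   rewrites them. *)
Lemma is_derive_unique_eta (f : R -> R) x l : is_derive f x l -> Derive (fun y => f y) x = l.
Proof. apply is_derive_unique. Qed.

Lemma is_derive_normalized (p q : R -> R) (p' q' t : R) :
  is_derive p t p' -> is_derive q t q' -> 0 < p t ^ 2 + q t ^ 2 ->
  let s := sqrt (p t ^ 2 + q t ^ 2) in
  let w := (p t * q' - q t * p') / (p t ^ 2 + q t ^ 2) in
  is_derive (fun u => p u / sqrt (p u ^ 2 + q u ^ 2)) t (- w * (q t / s)) /\
  is_derive (fun u => q u / sqrt (p u ^ 2 + q u ^ 2)) t (w * (p t / s)).
Proof.
  intros Hp Hq Hn s w.
  assert (Hs : 0 < s) by (apply sqrt_lt_R0, Hn).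
  assert (Hs2 : s * s = p t ^ 2 + q t ^ 2) by (apply sqrt_sqrt; lra).
  assert (Hsq : sqrt (p t * (p t * 1) + q t * (q t * 1)) = s) by (unfold s; f_equal; ring).
  split; auto_derive; rewrite ?Hsq.
  1, 3: repeat split; try (eexists; eassumption); nra.
  all: replace (Derive (fun x => p x) t) with p' by (symmetry; apply is_derive_unique, Hp);
    replace (Derive (fun x => q x) t) with q' by (symmetry; apply is_derive_unique, Hq);
    unfold w; rewrite <- Hs2; field_simplify; try lra;
    replace (s ^ 2) with (p t ^ 2 + q t ^ 2) by (rewrite <- Hs2; ring); field; lra.
Qed.

(** * Rotations of the plane *)

Definition rotx (ux uy th : R) := ux * cos th - uy * sin th.
Definition roty (ux uy th : R) := uy * cos th + ux * sin th.

Lemma rot_cross ux uy a b : ux ^ 2 + uy ^ 2 = 1 ->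
  rotx ux uy a * roty ux uy b - roty ux uy a * rotx ux uy b = sin (b - a).
Proof.
  intros Hu. unfold rotx, roty. rewrite sin_minus.
  transitivity ((ux ^ 2 + uy ^ 2) * (sin b * cos a - cos b * sin a)); [ring | rewrite Hu; ring].
Qed.

Lemma rot_dot ux uy a b : ux ^ 2 + uy ^ 2 = 1 ->
  rotx ux uy a * rotx ux uy b + roty ux uy a * roty ux uy b = cos (b - a).
Proof.
  intros Hu. unfold rotx, roty. rewrite cos_minus.
  transitivity ((ux ^ 2 + uy ^ 2) * (cos b * cos a + sin b * sin a)); [ring | rewrite Hu; ring].
Qed.

Lemma rot0_cross ux uy b : ux ^ 2 + uy ^ 2 = 1 -> ux * roty ux uy b - uy * rotx ux uy b = sin b.
Proof.
  intros Hu. unfold rotx, roty. transitivity ((ux ^ 2 + uy ^ 2) * sin b); [ring | rewrite Hu; ring].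
Qed.

Lemma rot0_dot ux uy b : ux ^ 2 + uy ^ 2 = 1 -> ux * rotx ux uy b + uy * roty ux uy b = cos b.
Proof.
  intros Hu. unfold rotx, roty. transitivity ((ux ^ 2 + uy ^ 2) * cos b); [ring | rewrite Hu; ring].
Qed.

Lemma rotx_add ux uy a b : rotx (rotx ux uy a) (roty ux uy a) b = rotx ux uy (a + b).
Proof. unfold rotx, roty. rewrite cos_plus, sin_plus. ring. Qed.

Lemma roty_add ux uy a b : roty (rotx ux uy a) (roty ux uy a) b = roty ux uy (a + b).
Proof. unfold rotx, roty. rewrite cos_plus, sin_plus. ring. Qed.

(* [(normal_diff_x, normal_diff_y)] is N(0) - N(th), where N(a) is the left unit normal to
   the direction obtained by rotating (ux, uy) by a. *)
Definition normal_diff_x ux uy th := roty ux uy th - uy.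
Definition normal_diff_y ux uy th := ux - rotx ux uy th.

Lemma normal_diff_dot_rot ux uy th psi : ux ^ 2 + uy ^ 2 = 1 ->
  rotx ux uy psi * normal_diff_x ux uy th + roty ux uy psi * normal_diff_y ux uy th =
  sin psi + sin (th - psi).
Proof.
  intros Hu. unfold normal_diff_x, normal_diff_y.
  rewrite <- (rot0_cross ux uy psi Hu), <- (rot_cross ux uy psi th Hu). ring.
Qed.

Lemma normal_diff_cross_rot ux uy th psi : ux ^ 2 + uy ^ 2 = 1 ->
  normal_diff_x ux uy th * roty ux uy psi - normal_diff_y ux uy th * rotx ux uy psi =
  cos (th - psi) - cos psi.
Proof.
  intros Hu. unfold normal_diff_x, normal_diff_y.
  rewrite <- (rot0_dot ux uy psi Hu), <- (rot_dot ux uy psi th Hu). ring.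
Qed.

Lemma cos_window_increment_le p0 pb th : 0 <= p0 <= pb -> pb <= th <= PI ->
  (cos (th - pb) - cos pb) - (cos (th - p0) - cos p0) <= 2 - 2 * cos th.
Proof.
  intros Hp Hth.
  pose proof (COS_bound (th - pb)). pose proof (COS_bound p0).
  pose proof (cos_decr_1 pb th ltac:(lra) ltac:(lra) ltac:(lra) ltac:(lra) ltac:(lra)).
  pose proof (cos_decr_1 (th - p0) th ltac:(lra) ltac:(lra) ltac:(lra) ltac:(lra) ltac:(lra)).
  lra.
Qed.

Lemma sin_nonpos_eq_PI x : 0 < x <= PI -> sin x <= 0 -> x = PI.
Proof.
  intros Hx Hs. destruct (Req_dec x PI) as [|Hne]; [assumption|].
  assert (0 < sin x) by (apply sin_gt_0; lra). lra.
Qed.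

Lemma parallel_unit_decomp vx vy ux uy : ux ^ 2 + uy ^ 2 = 1 -> vx * uy = vy * ux ->
  vx = (vx * ux + vy * uy) * ux /\ vy = (vx * ux + vy * uy) * uy.
Proof.
  intros Hu Hpar. split.
  - replace ((vx * ux + vy * uy) * ux) with (vx * (ux ^ 2 + uy ^ 2) + uy * (vy * ux - vx * uy))
      by ring.
    rewrite Hu, Hpar. ring.
  - replace ((vx * ux + vy * uy) * uy) with (vy * (ux ^ 2 + uy ^ 2) + ux * (vx * uy - vy * ux))
      by ring.
    rewrite Hu, Hpar. ring.
Qed.

Lemma unit_vector_angle ux uy vx vy :
  ux ^ 2 + uy ^ 2 = 1 -> vx ^ 2 + vy ^ 2 = 1 -> 0 <= ux * vy - uy * vx ->
  exists th, 0 <= th <= PI /\ vx = rotx ux uy th /\ vy = roty ux uy th.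
Proof.
  intros Hu Hv Hcross.
  set (d := ux * vx + uy * vy). set (cr := ux * vy - uy * vx) in *.
  assert (Hdc : d ^ 2 + cr ^ 2 = 1).
  { unfold d, cr. transitivity ((ux ^ 2 + uy ^ 2) * (vx ^ 2 + vy ^ 2));
      [ring | rewrite Hu, Hv; ring]. }
  assert (Hd : -1 <= d <= 1) by (split; nra).
  exists (acos d). split; [apply acos_bound|].
  assert (Hs : sin (acos d) = cr).
  { rewrite sin_acos by assumption. replace (1 - d²) with cr² by (unfold Rsqr; nra).
    apply sqrt_Rsqr, Hcross. }
  unfold rotx, roty. rewrite cos_acos, Hs by assumption. unfold d, cr. split.
  - transitivity (vx * (ux ^ 2 + uy ^ 2)); [rewrite Hu; ring | ring].
  - transitivity (vy * (ux ^ 2 + uy ^ 2)); [rewrite Hu; ring | ring].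
Qed.

(* Angles are measured from a common origin: p0 and pb are the tangent angles of an arc at
   its ends, d the angle of its chord and th that of a tangent which the arc may not cross. *)
Lemma angle_window p0 pb d th : 0 <= p0 <= PI -> 0 < d < PI -> 0 < th <= PI ->
  0 < sin (th - d) -> sin (p0 - d) <= 0 -> 0 <= sin (pb - d) -> sin (pb - th) <= 0 ->
  p0 <= pb < p0 + 2 * PI -> pb <= th.
Proof.
  intros Hp0 Hd Hth Htd Hp0d Hpbd Hpbth Hpb.
  assert (Hdth : d < th).
  { destruct (Rlt_le_dec d th) as [|Hle]; [assumption|].
    assert (sin (th - d) <= 0); [|lra].
    rewrite <- (Ropp_involutive (th - d)), sin_neg.
    assert (0 <= sin (- (th - d))) by (apply sin_ge_0; lra). lra. }
  assert (Hp0d' : p0 <= d).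
  { destruct (Rle_lt_dec p0 d) as [|Hlt]; [assumption|].
    assert (0 < sin (p0 - d)) by (apply sin_gt_0; lra). lra. }
  destruct (Rle_lt_dec pb th) as [|Hgt]; [assumption | exfalso].
  destruct (Rle_lt_dec (pb - d) PI).
  - assert (0 < sin (pb - th)) by (apply sin_gt_0; lra). lra.
  - assert (sin (pb - d) < 0) by (apply sin_lt_0; lra). lra.
Qed.

(** * Tangent angle of a regular curve *)

Definition speed c t := sqrt (dx c t ^ 2 + dy c t ^ 2).
Definition tx c t := dx c t / speed c t.
Definition ty c t := dy c t / speed c t.
Definition turning_rate c t :=
  (dx c t * ddy c t - dy c t * ddx c t) / (dx c t ^ 2 + dy c t ^ 2).

(* [turning_rate] is only known to be continuous on the parameter interval; clamping the
   parameter extends it continuously to all of R, which makes [turning_angle] derivable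
   everywhere. *)
Definition clamp c u := (ca c + cb c + Rabs (u - ca c) - Rabs (u - cb c)) / 2.

Definition turning_angle c t := RInt (fun u => turning_rate c (clamp c u)) (ca c) t.

Lemma clamp_in_dom c u : ca c <= cb c -> in_dom c (clamp c u).
Proof.
  intros Hab. unfold in_dom, clamp, Rabs.
  destruct (Rcase_abs (u - ca c)); destruct (Rcase_abs (u - cb c)); lra.
Qed.

Lemma clamp_id c u : in_dom c u -> clamp c u = u.
Proof.
  intros [Ha Hb]. unfold clamp, Rabs.
  destruct (Rcase_abs (u - ca c)); destruct (Rcase_abs (u - cb c)); lra.
Qed.

Lemma continuous_clamp c u : continuous (clamp c) u.
Proof.
  unfold clamp. apply @continuous_mult; [|apply continuous_const].
  apply @continuous_minus; [apply @continuous_plus|];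
    [apply continuous_const | | ]; apply continuous_Rabs_comp;
    apply @continuous_minus; auto using continuous_id, continuous_const.
Qed.

(* [line_side c v p t] is the cross product v x (gamma t - p), nonnegative iff gamma t lies to
   the left of the line through p directed by v; [tangent_side c p t] places p in the same way
   with respect to the tangent line at gamma t. *)
Definition line_side c vx vy px py t := vx * (cy c t - py) - vy * (cx c t - px).

Definition tangent_side c px py t := tx c t * (py - cy c t) - ty c t * (px - cx c t).

Section RegularCurve.

Variable c : curve.
Hypothesis Hc : regular_pos_curve c.

Lemma regular_dom_nonempty : ca c < cb c.
Proof. exact (proj1 (proj1 Hc)). Qed.

Lemma in_dom_start : in_dom c (ca c).
Proof. pose proof regular_dom_nonempty. unfold in_dom; lra. Qed.

Lemma in_dom_end : in_dom c (cb c).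
Proof. pose proof regular_dom_nonempty. unfold in_dom; lra. Qed.

Lemma regular_derivable :
  (forall u, ex_derive (cx c) u) /\ (forall u, ex_derive (cy c) u) /\
  (forall u, ex_derive (Derive (cx c)) u) /\ (forall u, ex_derive (Derive (cy c)) u).
Proof.
  destruct Hc as [[_ Hd] _].
  destruct (Hd _ in_dom_start) as (_ & _ & ? & ? & _ & _ & ? & ? & _). tauto.
Qed.

Lemma is_derive_cx t : is_derive (cx c) t (dx c t).
Proof. apply Derive_correct, regular_derivable. Qed.

Lemma is_derive_cy t : is_derive (cy c) t (dy c t).
Proof. apply Derive_correct, regular_derivable. Qed.

Lemma is_derive_dx t : is_derive (dx c) t (ddx c t).
Proof. apply Derive_correct, regular_derivable. Qed.

Lemma is_derive_dy t : is_derive (dy c) t (ddy c t).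
Proof. apply Derive_correct, regular_derivable. Qed.

Lemma velocity_sq_pos t : in_dom c t -> 0 < dx c t ^ 2 + dy c t ^ 2.
Proof.
  intros Ht. destruct (proj2 Hc t Ht) as [Hv _].
  destruct (Rle_lt_dec (dx c t ^ 2 + dy c t ^ 2) 0) as [Hle|]; [exfalso|assumption].
  apply Hv. f_equal; nra.
Qed.

Lemma speed_pos t : in_dom c t -> 0 < speed c t.
Proof. intros Ht. apply sqrt_lt_R0, velocity_sq_pos, Ht. Qed.

Lemma speed_sq t : speed c t * speed c t = dx c t ^ 2 + dy c t ^ 2.
Proof. apply sqrt_sqrt. nra. Qed.

Lemma dx_speed t : in_dom c t -> dx c t = speed c t * tx c t.
Proof. intros Ht. pose proof (speed_pos t Ht). unfold tx. field. lra. Qed.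

Lemma dy_speed t : in_dom c t -> dy c t = speed c t * ty c t.
Proof. intros Ht. pose proof (speed_pos t Ht). unfold ty. field. lra. Qed.

Lemma tangent_unit t : in_dom c t -> tx c t ^ 2 + ty c t ^ 2 = 1.
Proof.
  intros Ht. pose proof (speed_pos t Ht). pose proof (speed_sq t) as Hsq.
  unfold tx, ty. field_simplify; [|lra]. rewrite <- Hsq. field. lra.
Qed.

(* Also where the speed vanishes: both sides are then 0 by the convention x / 0 = 0. *)
Lemma curvature_mul_speed t : curvature c t * speed c t = turning_rate c t.
Proof.
  unfold curvature, turning_rate. fold (speed c t). rewrite <- speed_sq.
  destruct (Req_dec (speed c t) 0) as [->|Hs].
  - rewrite Rmult_0_l, Rdiv_0_r. simpl. rewrite !Rmult_0_l, Rdiv_0_r. ring.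
  - field. assumption.
Qed.

Lemma curvature_pos t : in_dom c t -> 0 < curvature c t.
Proof. intros Ht. apply (proj2 Hc t Ht). Qed.

Lemma turning_rate_pos t : in_dom c t -> 0 < turning_rate c t.
Proof.
  intros Ht. rewrite <- curvature_mul_speed.
  apply Rmult_lt_0_compat; [apply curvature_pos, Ht | apply speed_pos, Ht].
Qed.

Lemma is_derive_tangent t : in_dom c t ->
  is_derive (tx c) t (- turning_rate c t * ty c t) /\
  is_derive (ty c) t (turning_rate c t * tx c t).
Proof.
  intros Ht. exact (is_derive_normalized (dx c) (dy c) _ _ t
    (is_derive_dx t) (is_derive_dy t) (velocity_sq_pos t Ht)).
Qed.

Lemma continuous_dx t : continuous (dx c) t.
Proof. apply @ex_derive_continuous. eexists. apply is_derive_dx. Qed.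

Lemma continuous_dy t : continuous (dy c) t.
Proof. apply @ex_derive_continuous. eexists. apply is_derive_dy. Qed.

Lemma continuous_turning_rate t : in_dom c t -> continuous (turning_rate c) t.
Proof.
  intros Ht. destruct (proj1 Hc) as [_ Hd].
  destruct (Hd t Ht) as (_ & _ & _ & _ & _ & _ & _ & _ & Hx & Hy).
  pose proof (velocity_sq_pos t Ht).
  unfold turning_rate. apply @continuous_mult.
  - apply @continuous_minus; apply @continuous_mult; auto using continuous_dx, continuous_dy.
  - apply continuous_Rinv_comp; [|lra]. simpl.
    apply @continuous_plus; repeat apply @continuous_mult;
      auto using continuous_dx, continuous_dy, continuous_const.
Qed.

Lemma continuous_tangent t : in_dom c t -> continuous (tx c) t /\ continuous (ty c) t.
Proof.
  intros Ht. destruct (is_derive_tangent t Ht) as [Hx Hy].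
  split; apply @ex_derive_continuous; eexists; eassumption.
Qed.

Lemma continuous_clamped_rate u : continuous (fun v => turning_rate c (clamp c v)) u.
Proof.
  apply (continuous_comp (clamp c) (turning_rate c)); [apply continuous_clamp|].
  apply continuous_turning_rate, clamp_in_dom. pose proof regular_dom_nonempty. lra.
Qed.

Lemma is_derive_turning_angle t :
  is_derive (turning_angle c) t (turning_rate c (clamp c t)).
Proof.
  apply (is_derive_RInt (fun u => turning_rate c (clamp c u)) (turning_angle c) (ca c));
    [|apply continuous_clamped_rate].
  apply filter_forall. intros u. apply @RInt_correct, @ex_RInt_continuous.
  intros v _. apply continuous_clamped_rate.
Qed.

Lemma turning_angle_start : turning_angle c (ca c) = 0.
Proof. unfold turning_angle. rewrite RInt_point. reflexivity. Qed.

Lemma continuous_turning_angle : continuity (turning_angle c).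
Proof.
  intros t. apply continuity_pt_filterlim, @ex_derive_continuous.
  eexists. apply is_derive_turning_angle.
Qed.

Lemma turning_angle_lt t t' : t < t' -> turning_angle c t < turning_angle c t'.
Proof.
  intros Htt'.
  destruct (MVT_gen (turning_angle c) t t' (fun u => turning_rate c (clamp c u)))
    as (u & _ & Hu).
  - intros u _. apply is_derive_turning_angle.
  - intros u _. apply continuous_turning_angle.
  - assert (0 < turning_rate c (clamp c u)).
    { apply turning_rate_pos, clamp_in_dom. pose proof regular_dom_nonempty. lra. }
    nra.
Qed.

Lemma turning_angle_bounds t : in_dom c t ->
  0 <= turning_angle c t <= turning_angle c (cb c).
Proof.
  intros [Ha Hb]. rewrite <- turning_angle_start. split.
  - destruct Ha as [Ha | <-]; [left; apply turning_angle_lt, Ha | right; reflexivity].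
  - destruct Hb as [Hb | ->]; [left; apply turning_angle_lt, Hb | right; reflexivity].
Qed.

Lemma turning_angle_end_pos : 0 < turning_angle c (cb c).
Proof. rewrite <- turning_angle_start. apply turning_angle_lt, regular_dom_nonempty. Qed.

Lemma total_curvature_eq : total_curvature c = turning_angle c (cb c).
Proof.
  pose proof regular_dom_nonempty.
  unfold total_curvature, turning_angle. apply RInt_ext.
  rewrite Rmin_left, Rmax_right by lra. intros u Hu.
  rewrite clamp_id by (unfold in_dom; lra). apply curvature_mul_speed.
Qed.

Lemma tangent_rotation t : in_dom c t ->
  tx c t = rotx (tx c (ca c)) (ty c (ca c)) (turning_angle c t) /\
  ty c t = roty (tx c (ca c)) (ty c (ca c)) (turning_angle c t).
Proof.
  intros Ht.
  set (ux := tx c (ca c)); set (uy := ty c (ca c)).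
  set (h u := (tx c u - rotx ux uy (turning_angle c u)) ^ 2 +
              (ty c u - roty ux uy (turning_angle c u)) ^ 2).
  assert (Hh : h (ca c) = h t).
  { destruct Ht as [[Hlt | <-] Hb]; [|reflexivity].
    apply eq_is_derive; [|assumption].
    intros u Hu. assert (Hud : in_dom c u) by (unfold in_dom; lra).
    destruct (is_derive_tangent u Hud) as [Dx Dy].
    pose proof (is_derive_turning_angle u) as Dphi. rewrite clamp_id in Dphi by exact Hud.
    unfold h, rotx, roty. auto_derive.
    - repeat split; eexists; eassumption.
    - rewrite (is_derive_unique_eta _ _ _ Dx), (is_derive_unique_eta _ _ _ Dy),
        (is_derive_unique_eta _ _ _ Dphi).
      change zero with 0. ring. }
  assert (Hh0 : h (ca c) = 0).
  { unfold h, rotx, roty. rewrite turning_angle_start, cos_0, sin_0. unfold ux, uy. ring. }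
  rewrite Hh0 in Hh. unfold h in Hh.
  set (p := tx c t - _) in Hh. set (q := ty c t - _) in Hh.
  assert (p = 0) by nra. assert (q = 0) by nra.
  unfold p, q in *. split; lra.
Qed.

Lemma tangent_rotation_from ux uy p0 t : in_dom c t ->
  tx c (ca c) = rotx ux uy p0 -> ty c (ca c) = roty ux uy p0 ->
  tx c t = rotx ux uy (p0 + turning_angle c t) /\ ty c t = roty ux uy (p0 + turning_angle c t).
Proof.
  intros Ht E1 E2. destruct (tangent_rotation t Ht) as [-> ->].
  rewrite E1, E2, rotx_add, roty_add. split; reflexivity.
Qed.

Lemma initial_tangent_unit : tx c (ca c) ^ 2 + ty c (ca c) ^ 2 = 1.
Proof. apply tangent_unit, in_dom_start. Qed.

Lemma initial_tangent_cross t : in_dom c t ->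
  tx c (ca c) * ty c t - ty c (ca c) * tx c t = sin (turning_angle c t).
Proof.
  intros Ht. destruct (tangent_rotation t Ht) as [-> ->].
  apply rot0_cross, initial_tangent_unit.
Qed.

Lemma is_derive_line_side vx vy px py t :
  is_derive (line_side c vx vy px py) t (vx * dy c t - vy * dx c t).
Proof.
  pose proof (is_derive_cx t) as Dx. pose proof (is_derive_cy t) as Dy.
  unfold line_side. auto_derive; [repeat split; eexists; eassumption|].
  rewrite (is_derive_unique_eta _ _ _ Dx), (is_derive_unique_eta _ _ _ Dy). ring.
Qed.

Lemma continuous_line_side vx vy px py : continuity (line_side c vx vy px py).
Proof.
  intros t. apply continuity_pt_filterlim, @ex_derive_continuous.
  eexists. apply is_derive_line_side.
Qed.

Lemma line_side_min_start vx vy px py :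
  (forall t, in_dom c t -> line_side c vx vy px py (ca c) <= line_side c vx vy px py t) ->
  0 <= vx * ty c (ca c) - vy * tx c (ca c).
Proof.
  intros Hmin. pose proof (speed_pos _ in_dom_start).
  assert (Hd : 0 <= vx * dy c (ca c) - vy * dx c (ca c)).
  { apply (is_derive_ge0_at_left_min (line_side c vx vy px py) (ca c) (cb c));
      auto using regular_dom_nonempty, is_derive_line_side. }
  rewrite dx_speed, dy_speed in Hd by apply in_dom_start. nra.
Qed.

Lemma line_side_min_end vx vy px py :
  (forall t, in_dom c t -> line_side c vx vy px py (cb c) <= line_side c vx vy px py t) ->
  vx * ty c (cb c) - vy * tx c (cb c) <= 0.
Proof.
  intros Hmin. pose proof (speed_pos _ in_dom_end).
  assert (Hd : vx * dy c (cb c) - vy * dx c (cb c) <= 0).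
  { apply (is_derive_le0_at_right_min (line_side c vx vy px py) (ca c) (cb c));
      auto using regular_dom_nonempty, is_derive_line_side. }
  rewrite dx_speed, dy_speed in Hd by apply in_dom_end. nra.
Qed.

Lemma line_side_min_interior vx vy px py s : ca c < s < cb c ->
  (forall t, in_dom c t -> line_side c vx vy px py s <= line_side c vx vy px py t) ->
  vx * ty c s - vy * tx c s = 0.
Proof.
  intros Hs Hmin. assert (Hsd : in_dom c s) by (unfold in_dom; lra).
  pose proof (speed_pos _ Hsd).
  assert (Hd : vx * dy c s - vy * dx c s = 0).
  { apply (is_derive_eq0_at_interior_min (line_side c vx vy px py) (ca c) s (cb c)); try lra;
      auto using is_derive_line_side. }
  rewrite dx_speed, dy_speed in Hd by exact Hsd. nra.
Qed.

Lemma is_derive_tangent_side px py t : in_dom c t ->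
  is_derive (tangent_side c px py) t
    (- turning_rate c t * (tx c t * (px - cx c t) + ty c t * (py - cy c t))).
Proof.
  intros Ht. destruct (is_derive_tangent t Ht) as [Dx Dy].
  pose proof (is_derive_cx t) as Dcx. pose proof (is_derive_cy t) as Dcy.
  unfold tangent_side. auto_derive; [repeat split; eexists; eassumption|].
  rewrite (is_derive_unique_eta _ _ _ Dx), (is_derive_unique_eta _ _ _ Dy),
    (is_derive_unique_eta _ _ _ Dcx), (is_derive_unique_eta _ _ _ Dcy),
    (dx_speed t Ht), (dy_speed t Ht).
  ring.
Qed.

Lemma tangent_side_min_start px py :
  (forall t, in_dom c t -> tangent_side c px py (ca c) <= tangent_side c px py t) ->
  tx c (ca c) * (px - cx c (ca c)) + ty c (ca c) * (py - cy c (ca c)) <= 0.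
Proof.
  intros Hmin. pose proof (turning_rate_pos _ in_dom_start).
  enough (0 <= - turning_rate c (ca c) *
    (tx c (ca c) * (px - cx c (ca c)) + ty c (ca c) * (py - cy c (ca c)))) by nra.
  apply (is_derive_ge0_at_left_min (tangent_side c px py) (ca c) (cb c));
    auto using regular_dom_nonempty, is_derive_tangent_side, in_dom_start.
Qed.

Lemma tangent_side_min_end px py :
  (forall t, in_dom c t -> tangent_side c px py (cb c) <= tangent_side c px py t) ->
  0 <= tx c (cb c) * (px - cx c (cb c)) + ty c (cb c) * (py - cy c (cb c)).
Proof.
  intros Hmin. pose proof (turning_rate_pos _ in_dom_end).
  enough (- turning_rate c (cb c) *
    (tx c (cb c) * (px - cx c (cb c)) + ty c (cb c) * (py - cy c (cb c))) <= 0) by nra.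
  apply (is_derive_le0_at_right_min (tangent_side c px py) (ca c) (cb c));
    auto using regular_dom_nonempty, is_derive_tangent_side, in_dom_end.
Qed.

Lemma tangent_side_min_interior px py s : ca c < s < cb c ->
  (forall t, in_dom c t -> tangent_side c px py s <= tangent_side c px py t) ->
  tx c s * (px - cx c s) + ty c s * (py - cy c s) = 0.
Proof.
  intros Hs Hmin. assert (Hsd : in_dom c s) by (unfold in_dom; lra).
  pose proof (turning_rate_pos _ Hsd).
  assert (- turning_rate c s * (tx c s * (px - cx c s) + ty c s * (py - cy c s)) = 0).
  { apply (is_derive_eq0_at_interior_min (tangent_side c px py) (ca c) s (cb c)); try lra;
      auto using is_derive_tangent_side. }
  nra.
Qed.

End RegularCurve.

(** * Convex curves of total curvature at most pi *)

Section ConvexCurve.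

Variable c : curve.
Hypothesis Hcv : convex_curve c.
Let Hc : regular_pos_curve c := proj1 Hcv.

Lemma tangent_line_supports t u : in_dom c t -> in_dom c u ->
  0 <= line_side c (tx c t) (ty c t) (cx c t) (cy c t) u.
Proof.
  intros Ht Hu. pose proof (proj2 Hcv t u Ht Hu) as Hsupp. pose proof (speed_pos c Hc t Ht).
  rewrite (dx_speed c Hc t Ht), (dy_speed c Hc t Ht) in Hsupp.
  unfold line_side. nra.
Qed.

Lemma tangent_side_point_nonneg u t : in_dom c t -> in_dom c u ->
  0 <= tangent_side c (cx c u) (cy c u) t.
Proof. intros Ht Hu. exact (tangent_line_supports t u Ht Hu). Qed.

Lemma tangent_return_point t2 : in_dom c t2 -> ca c < t2 ->
  tx c t2 = tx c (ca c) -> ty c t2 = ty c (ca c) ->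
  exists mu, mu <= 0 /\ (t2 < cb c -> mu = 0) /\
    cx c t2 - cx c (ca c) = mu * tx c (ca c) /\ cy c t2 - cy c (ca c) = mu * ty c (ca c).
Proof.
  intros Ht2 Hat2 Ex Ey.
  pose proof (in_dom_start c Hc) as Ha. pose proof (tangent_unit c Hc _ Ha) as Hu.
  pose proof (tangent_line_supports _ _ Ha Ht2) as W1.
  pose proof (tangent_line_supports _ _ Ht2 Ha) as W2.
  unfold line_side in W1, W2. rewrite Ex, Ey in W2.
  set (xa := cx c (ca c)) in *. set (ya := cy c (ca c)) in *.
  set (ux := tx c (ca c)) in *. set (uy := ty c (ca c)) in *.
  assert (Hw : (cx c t2 - xa) * uy = (cy c t2 - ya) * ux) by lra.
  destruct (parallel_unit_decomp _ _ _ _ Hu Hw) as [Px Py].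
  set (mu := (cx c t2 - xa) * ux + (cy c t2 - ya) * uy) in *.
  (* The point gamma(a) is on the left of every tangent, and on the tangent at t2. *)
  assert (Hmin : forall t, in_dom c t -> tangent_side c xa ya t2 <= tangent_side c xa ya t).
  { intros t Ht. pose proof (tangent_side_point_nonneg (ca c) t Ht Ha) as Hside.
    fold xa ya in Hside. unfold tangent_side at 1. rewrite Ex, Ey. lra. }
  assert (Hval : tx c t2 * (xa - cx c t2) + ty c t2 * (ya - cy c t2) = - mu).
  { rewrite Ex, Ey. fold ux uy.
    replace (xa - cx c t2) with (- (cx c t2 - xa)) by ring.
    replace (ya - cy c t2) with (- (cy c t2 - ya)) by ring.
    rewrite Px, Py. transitivity (- mu * (ux ^ 2 + uy ^ 2)); [ring | rewrite Hu; ring]. }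
  exists mu. split; [|split; [|split; assumption]].
  - destruct (proj2 Ht2) as [Hlt | Eb].
    + enough (tx c t2 * (xa - cx c t2) + ty c t2 * (ya - cy c t2) = 0) by lra.
      apply (tangent_side_min_interior c Hc); [lra | exact Hmin].
    + rewrite Eb in Hmin, Hval. pose proof (tangent_side_min_end c Hc xa ya Hmin). lra.
  - intros Hlt.
    enough (tx c t2 * (xa - cx c t2) + ty c t2 * (ya - cy c t2) = 0) by lra.
    apply (tangent_side_min_interior c Hc); [lra | exact Hmin].
Qed.

Lemma chord_backward_of_tangent_return t2 : in_dom c t2 -> ca c < t2 ->
  tx c t2 = tx c (ca c) -> ty c t2 = ty c (ca c) ->
  (forall t, in_dom c t -> 0 <= line_side c (- (cx c (cb c) - cx c (ca c)))
                                   (- (cy c (cb c) - cy c (ca c))) (cx c (ca c)) (cy c (ca c)) t) ->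
  exists nu, nu <= 0 /\ cx c (cb c) - cx c (ca c) = nu * tx c (ca c) /\
                        cy c (cb c) - cy c (ca c) = nu * ty c (ca c).
Proof.
  intros Ht2 Hat2 Ex Ey Hleft.
  destruct (tangent_return_point t2 Ht2 Hat2 Ex Ey) as (mu & Hmu & Hmu0 & Px & Py).
  destruct (proj2 Ht2) as [Hlt | <-]; [|exists mu; auto].
  (* The curve is back at its starting point at t2, where it touches the reversed chord. *)
  rewrite (Hmu0 Hlt), Rmult_0_l in Px, Py.
  pose proof (in_dom_start c Hc) as Ha. pose proof (in_dom_end c Hc) as Hb.
  pose proof (tangent_unit c Hc _ Ha) as Hu.
  set (xa := cx c (ca c)) in *. set (ya := cy c (ca c)) in *.
  set (Dx := cx c (cb c) - xa) in *. set (Dy := cy c (cb c) - ya) in *.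
  set (ux := tx c (ca c)) in *. set (uy := ty c (ca c)) in *.
  assert (Hpar : Dx * uy = Dy * ux).
  { rewrite <- Ex, <- Ey.
    enough (- Dx * ty c t2 - - Dy * tx c t2 = 0) by lra.
    apply (line_side_min_interior c Hc _ _ xa ya); [lra|].
    intros t Ht. specialize (Hleft t Ht). unfold line_side in *.
    rewrite Px, Py, !Rmult_0_r. lra. }
  destruct (parallel_unit_decomp _ _ _ _ Hu Hpar) as [Qx Qy].
  exists (Dx * ux + Dy * uy). split; [|split; assumption].
  enough (ux * Dx + uy * Dy <= 0) by lra.
  apply (tangent_side_min_start c Hc). intros t Ht.
  pose proof (tangent_side_point_nonneg (cb c) t Ht Hb) as Hside.
  unfold tangent_side in *. fold xa ya ux uy Dx Dy. lra.
Qed.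

Hypothesis Hpi : turning_angle c (cb c) <= PI.

Lemma end_left_of_initial_tangent :
  0 < line_side c (tx c (ca c)) (ty c (ca c)) (cx c (ca c)) (cy c (ca c)) (cb c).
Proof.
  pose proof (in_dom_start c Hc) as Ha. pose proof (in_dom_end c Hc) as Hb.
  pose proof (regular_dom_nonempty c Hc) as Hab.
  set (f := line_side c (tx c (ca c)) (ty c (ca c)) (cx c (ca c)) (cy c (ca c))).
  assert (Hf : forall u, in_dom c u -> 0 <= f u)
    by (intros u Hu; apply tangent_line_supports; auto).
  destruct (Rlt_le_dec 0 (f (cb c))) as [|Hfb]; [assumption | exfalso].
  assert (HPI : turning_angle c (cb c) = PI).
  { apply sin_nonpos_eq_PI; [split; [apply (turning_angle_end_pos c Hc) | exact Hpi] |].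
    rewrite <- (initial_tangent_cross c Hc _ Hb).
    apply (line_side_min_end c Hc _ _ (cx c (ca c)) (cy c (ca c))).
    intros u Hu. specialize (Hf u Hu). fold f. lra. }
  (* The final tangent is opposite to the initial one, so both supporting lines contain the
     whole curve, which is therefore a segment: impossible with positive curvature. *)
  assert (Hflat : forall u, in_dom c u -> f u = 0).
  { intros u Hu. pose proof (tangent_line_supports _ _ Hb Hu) as Hsupp. specialize (Hf u Hu).
    destruct (tangent_rotation c Hc _ Hb) as [Tbx Tby].
    rewrite HPI in Tbx, Tby. unfold rotx, roty in Tbx, Tby. rewrite cos_PI, sin_PI in Tbx, Tby.
    unfold f, line_side in *. rewrite Tbx, Tby in Hsupp. nra. }
  destruct (IVT_gen (turning_angle c) (ca c) (cb c) (PI / 2)) as (s & Hs & Hphis).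
  { apply continuous_turning_angle, Hc. }
  { rewrite (turning_angle_start c), HPI, Rmin_left, Rmax_right; pose proof PI_RGT_0; lra. }
  rewrite Rmin_left, Rmax_right in Hs by lra.
  assert (Hsa : s <> ca c)
    by (intros ->; rewrite (turning_angle_start c) in Hphis; pose proof PI_RGT_0; lra).
  assert (Hsb : s <> cb c) by (intros ->; pose proof PI_RGT_0; lra).
  assert (Hsd : in_dom c s) by (unfold in_dom; lra).
  assert (Hcross : tx c (ca c) * ty c s - ty c (ca c) * tx c s = 0).
  { apply (line_side_min_interior c Hc _ _ (cx c (ca c)) (cy c (ca c))); [lra|].
    intros u Hu. fold f. rewrite (Hflat s Hsd). apply Hf, Hu. }
  rewrite (initial_tangent_cross c Hc s Hsd), Hphis, sin_PI2 in Hcross. lra.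
Qed.

Lemma start_left_of_final_tangent :
  0 < line_side c (tx c (cb c)) (ty c (cb c)) (cx c (cb c)) (cy c (cb c)) (ca c).
Proof.
  pose proof (in_dom_start c Hc) as Ha. pose proof (in_dom_end c Hc) as Hb.
  pose proof end_left_of_initial_tangent as Hend.
  set (k := line_side c (tx c (cb c)) (ty c (cb c)) (cx c (cb c)) (cy c (cb c))).
  destruct (Rlt_le_dec 0 (k (ca c))) as [|Hka]; [assumption | exfalso].
  assert (HPI : turning_angle c (cb c) = PI).
  { apply sin_nonpos_eq_PI; [split; [apply (turning_angle_end_pos c Hc) | exact Hpi] |].
    rewrite <- (initial_tangent_cross c Hc _ Hb).
    enough (0 <= tx c (cb c) * ty c (ca c) - ty c (cb c) * tx c (ca c)) by lra.
    apply (line_side_min_start c Hc _ _ (cx c (cb c)) (cy c (cb c))). intros u Hu.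
    pose proof (tangent_line_supports _ _ Hb Hu) as Hsupp. fold k in Hsupp, Hka |- *. lra. }
  destruct (tangent_rotation c Hc _ Hb) as [Tbx Tby].
  rewrite HPI in Tbx, Tby. unfold rotx, roty in Tbx, Tby. rewrite cos_PI, sin_PI in Tbx, Tby.
  unfold k, line_side in Hka, Hend. rewrite Tbx, Tby in Hka. nra.
Qed.

Lemma right_of_chord u : in_dom c u ->
  line_side c (cx c (cb c) - cx c (ca c)) (cy c (cb c) - cy c (ca c))
    (cx c (ca c)) (cy c (ca c)) u <= 0.
Proof.
  intros Hu. pose proof (in_dom_start c Hc) as Ha. pose proof (regular_dom_nonempty c Hc) as Hab.
  pose proof end_left_of_initial_tangent as Hend. unfold line_side in Hend.
  set (Dx := cx c (cb c) - cx c (ca c)) in *. set (Dy := cy c (cb c) - cy c (ca c)) in *.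
  set (g := line_side c Dx Dy (cx c (ca c)) (cy c (ca c))).
  destruct (continuity_ab_maj g (ca c) (cb c)) as (m & Hmax & Hm);
    [lra | intros; apply continuous_line_side, Hc |].
  assert (Hmd : in_dom c m) by exact Hm.
  enough (g m <= 0) by (specialize (Hmax u Hu); lra).
  destruct (Rle_lt_dec (g m) 0) as [|Hpos]; [assumption | exfalso].
  assert (Hma : m <> ca c) by (intros ->; unfold g, line_side in Hpos; lra).
  assert (Hmb : m <> cb c) by (intros ->; unfold g, line_side, Dx, Dy in Hpos; lra).
  (* At an interior maximum of the distance to the chord, the tangent is parallel to it. *)
  assert (Hpar : Dx * ty c m = Dy * tx c m).
  { enough (- Dx * ty c m - - Dy * tx c m = 0) by lra.
    apply (line_side_min_interior c Hc _ _ (cx c (ca c)) (cy c (ca c))); [destruct Hm; lra|].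
    intros t Ht. specialize (Hmax t Ht). unfold g, line_side in *. lra. }
  destruct (parallel_unit_decomp _ _ _ _ (tangent_unit c Hc m Hmd) Hpar) as [HDx HDy].
  set (nu := Dx * tx c m + Dy * ty c m) in *.
  pose proof (tangent_line_supports m (ca c) Hmd Ha) as Hsupp.
  unfold g, line_side in Hpos, Hsupp. rewrite HDx, HDy in Hpos.
  assert (nu < 0) by nra.
  pose proof (initial_tangent_cross c Hc m Hmd) as Hsin.
  pose proof (turning_angle_bounds c Hc m Hmd).
  assert (0 <= sin (turning_angle c m)) by (apply sin_ge_0; lra).
  rewrite HDx, HDy in Hend. nra.
Qed.

Lemma chord_direction : exists r d, 0 < r /\ 0 < d < PI /\
  0 < sin (turning_angle c (cb c) - d) /\
  cx c (cb c) - cx c (ca c) = r * rotx (tx c (ca c)) (ty c (ca c)) d /\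
  cy c (cb c) - cy c (ca c) = r * roty (tx c (ca c)) (ty c (ca c)) d.
Proof.
  pose proof (in_dom_end c Hc) as Hb. pose proof (initial_tangent_unit c Hc) as Hu.
  pose proof end_left_of_initial_tangent as Hend.
  pose proof start_left_of_final_tangent as Hstart.
  destruct (tangent_rotation c Hc _ Hb) as [Tbx Tby].
  unfold line_side in Hend, Hstart. rewrite Tbx, Tby in Hstart.
  set (Dx := cx c (cb c) - cx c (ca c)) in *. set (Dy := cy c (cb c) - cy c (ca c)) in *.
  set (ux := tx c (ca c)) in *. set (uy := ty c (ca c)) in *.
  assert (HD : 0 < Dx ^ 2 + Dy ^ 2).
  { destruct (Rle_lt_dec (Dx ^ 2 + Dy ^ 2) 0); [|assumption].
    assert (Dx = 0) by nra. assert (Dy = 0) by nra. nra. }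
  set (r := sqrt (Dx ^ 2 + Dy ^ 2)).
  assert (Hr : 0 < r) by (apply sqrt_lt_R0, HD).
  assert (Hr2 : r * r = Dx ^ 2 + Dy ^ 2) by (apply sqrt_sqrt; lra).
  destruct (unit_vector_angle ux uy (Dx / r) (Dy / r)) as (d & Hd & Rx & Ry).
  - assumption.
  - field_simplify; [|lra]. rewrite <- Hr2. field. lra.
  - replace (ux * (Dy / r) - uy * (Dx / r)) with ((ux * Dy - uy * Dx) / r) by (field; lra).
    apply Rdiv_le_0_compat; lra.
  - assert (HDx : Dx = r * rotx ux uy d) by (rewrite <- Rx; field; lra).
    assert (HDy : Dy = r * roty ux uy d) by (rewrite <- Ry; field; lra).
    exists r, d. split; [assumption|]. split; [|split; [|split; assumption]].
    + assert (Hsin : 0 < r * sin d).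
      { rewrite <- (rot0_cross ux uy d Hu). rewrite HDx, HDy in Hend. nra. }
      assert (0 < sin d) by nra.
      destruct Hd as [[Hd0 | <-] [HdPI | ->]]; rewrite ?sin_0, ?sin_PI in *; lra.
    + rewrite <- (rot_cross ux uy d (turning_angle c (cb c)) Hu).
      assert (Hstart' : 0 < Dx * roty ux uy (turning_angle c (cb c))
                              - Dy * rotx ux uy (turning_angle c (cb c))) by (unfold Dx, Dy; lra).
      rewrite HDx, HDy in Hstart'. nra.
Qed.

End ConvexCurve.

(** * Position of the inner curve *)

Lemma convex_hull_half_plane (S : R * R -> Prop) p vx vy px py :
  (forall q, S q -> 0 <= vx * (snd q - py) - vy * (fst q - px)) ->
  convex_hull S p -> 0 <= vx * (snd p - py) - vy * (fst p - px).
Proof.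
  intros HS Hp. apply Hp; [|exact HS].
  intros q1 q2 l Hq1 Hq2 Hl. simpl.
  replace (vx * (l * snd q1 + (1 - l) * snd q2 - py) - vy * (l * fst q1 + (1 - l) * fst q2 - px))
    with (l * (vx * (snd q1 - py) - vy * (fst q1 - px)) +
          (1 - l) * (vx * (snd q2 - py) - vy * (fst q2 - px))) by ring.
  apply Rplus_le_le_0_compat; apply Rmult_le_pos; lra.
Qed.

Lemma pt_eq_coords c1 c2 t1 t2 :
  pt c1 t1 = pt c2 t2 -> cx c1 t1 = cx c2 t2 /\ cy c1 t1 = cy c2 t2.
Proof. intros Heq. injection Heq as Hx Hy. split; assumption. Qed.

Section TwoCurves.

Variables C1 C2 : curve.
Hypothesis Hcv1 : convex_curve C1.
Hypothesis Hcv2 : convex_curve C2.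
Hypothesis Hpi : turning_angle C2 (cb C2) <= PI.
Hypothesis Hhull : forall p, trace C1 p -> convex_hull (trace C2) p.
Let Hc1 : regular_pos_curve C1 := proj1 Hcv1.
Let Hc2 : regular_pos_curve C2 := proj1 Hcv2.

Lemma hull_line_side vx vy px py :
  (forall u, in_dom C2 u -> 0 <= line_side C2 vx vy px py u) ->
  forall t, in_dom C1 t -> 0 <= line_side C1 vx vy px py t.
Proof.
  intros H2 t Ht. apply (convex_hull_half_plane (trace C2) (pt C1 t)).
  - intros q (u & Hu & <-). exact (H2 u Hu).
  - apply Hhull. exists t. split; [exact Ht | reflexivity].
Qed.

Lemma hull_right_of_chord t : in_dom C1 t ->
  0 <= line_side C1 (- (cx C2 (cb C2) - cx C2 (ca C2))) (- (cy C2 (cb C2) - cy C2 (ca C2)))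
         (cx C2 (ca C2)) (cy C2 (ca C2)) t.
Proof.
  apply hull_line_side. intros u Hu. pose proof (right_of_chord C2 Hcv2 Hpi u Hu).
  unfold line_side in *. lra.
Qed.

Lemma reversed_endpoints_impossible :
  pt C1 (ca C1) = pt C2 (cb C2) -> pt C1 (cb C1) = pt C2 (ca C2) -> False.
Proof.
  intros EA EB.
  destruct (pt_eq_coords _ _ _ _ EA) as [EAx EAy].
  destruct (pt_eq_coords _ _ _ _ EB) as [EBx EBy].
  pose proof (in_dom_start C1 Hc1) as Ha1. pose proof (in_dom_end C1 Hc1) as Hb1.
  pose proof (tangent_unit C1 Hc1 _ Ha1) as Hu.
  pose proof (start_left_of_final_tangent C2 Hcv2 Hpi) as Hstart.
  pose proof (tangent_line_supports C1 Hcv1 _ _ Ha1 Hb1) as Hsupp.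
  assert (Hchord : 0 <= - (cx C2 (cb C2) - cx C2 (ca C2)) * ty C1 (ca C1)
                    - - (cy C2 (cb C2) - cy C2 (ca C2)) * tx C1 (ca C1)).
  { apply (line_side_min_start C1 Hc1 _ _ (cx C2 (ca C2)) (cy C2 (ca C2))). intros t Ht.
    pose proof (hull_right_of_chord t Ht). unfold line_side in *. rewrite EAx, EAy. lra. }
  assert (Hfinal : 0 <= tx C2 (cb C2) * ty C1 (ca C1) - ty C2 (cb C2) * tx C1 (ca C1)).
  { apply (line_side_min_start C1 Hc1 _ _ (cx C2 (cb C2)) (cy C2 (cb C2))). intros t Ht.
    assert (0 <= line_side C1 (tx C2 (cb C2)) (ty C2 (cb C2)) (cx C2 (cb C2)) (cy C2 (cb C2)) t)
      by (apply hull_line_side; auto using tangent_line_supports, in_dom_end).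
    unfold line_side in *. rewrite EAx, EAy. lra. }
  unfold line_side in Hsupp, Hstart. rewrite EAx, EAy, EBx, EBy in Hsupp.
  set (Dx := cx C2 (cb C2) - cx C2 (ca C2)) in *. set (Dy := cy C2 (cb C2) - cy C2 (ca C2)) in *.
  set (ux := tx C1 (ca C1)) in *. set (uy := ty C1 (ca C1)) in *.
  (* The initial tangent of C1 is parallel to the chord; it must point along it, not back. *)
  assert (Hpar : Dx * uy = Dy * ux) by (unfold Dx, Dy in *; lra).
  destruct (parallel_unit_decomp _ _ _ _ Hu Hpar) as [HDx HDy].
  set (lam := Dx * ux + Dy * uy) in *.
  assert (Hlam : 0 <= lam).
  { enough (ux * (cx C1 (cb C1) - cx C1 (ca C1)) + uy * (cy C1 (cb C1) - cy C1 (ca C1)) <= 0)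
      by (rewrite EAx, EAy, EBx, EBy in *; unfold lam, Dx, Dy; lra).
    apply (tangent_side_min_start C1 Hc1). intros t Ht.
    pose proof (tangent_side_point_nonneg C1 Hcv1 (cb C1) t Ht Hb1).
    unfold tangent_side in *. fold ux uy. rewrite EAx, EAy, EBx, EBy in *.
    replace (ux * (cy C2 (ca C2) - cy C2 (cb C2)) - uy * (cx C2 (ca C2) - cx C2 (cb C2)))
      with (- (ux * Dy - uy * Dx)) by (unfold Dx, Dy; ring).
    lra. }
  replace (tx C2 (cb C2) * (cy C2 (ca C2) - cy C2 (cb C2))
           - ty C2 (cb C2) * (cx C2 (ca C2) - cx C2 (cb C2)))
    with (- tx C2 (cb C2) * Dy + ty C2 (cb C2) * Dx) in Hstart by (unfold Dx, Dy; ring).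
  rewrite HDx, HDy in Hstart. nra.
Qed.

Section ForwardEndpoints.

Hypothesis EA : pt C1 (ca C1) = pt C2 (ca C2).
Hypothesis EB : pt C1 (cb C1) = pt C2 (cb C2).

Lemma forward_initial_cross :
  0 <= tx C2 (ca C2) * ty C1 (ca C1) - ty C2 (ca C2) * tx C1 (ca C1).
Proof.
  destruct (pt_eq_coords _ _ _ _ EA) as [EAx EAy].
  apply (line_side_min_start C1 Hc1 _ _ (cx C2 (ca C2)) (cy C2 (ca C2))). intros t Ht.
  assert (0 <= line_side C1 (tx C2 (ca C2)) (ty C2 (ca C2)) (cx C2 (ca C2)) (cy C2 (ca C2)) t)
    by (apply hull_line_side; auto using tangent_line_supports, in_dom_start).
  unfold line_side in *. rewrite EAx, EAy. lra.
Qed.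

Lemma forward_turning_lt_2PI : turning_angle C1 (cb C1) < 2 * PI.
Proof.
  destruct (pt_eq_coords _ _ _ _ EA) as [EAx EAy].
  destruct (pt_eq_coords _ _ _ _ EB) as [EBx EBy].
  pose proof (regular_dom_nonempty C1 Hc1) as Hab.
  destruct (Rlt_le_dec (turning_angle C1 (cb C1)) (2 * PI)) as [|Hge]; [assumption | exfalso].
  destruct (IVT_gen (turning_angle C1) (ca C1) (cb C1) (2 * PI)) as (t2 & Ht2 & Hphi2).
  { apply continuous_turning_angle, Hc1. }
  { rewrite (turning_angle_start C1), Rmin_left, Rmax_right; pose proof PI_RGT_0; lra. }
  rewrite Rmin_left, Rmax_right in Ht2 by lra.
  assert (Ht2d : in_dom C1 t2) by exact Ht2.
  assert (Hat2 : ca C1 < t2).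
  { destruct Ht2 as [[|<-] _]; [assumption|].
    rewrite (turning_angle_start C1) in Hphi2. pose proof PI_RGT_0. lra. }
  destruct (tangent_rotation C1 Hc1 t2 Ht2d) as [Tx Ty].
  unfold rotx, roty in Tx, Ty. rewrite Hphi2, cos_2PI, sin_2PI in Tx, Ty.
  destruct (chord_backward_of_tangent_return C1 Hcv1 t2 Ht2d Hat2) as (nu & Hnu & Dx & Dy);
    [lra | lra | |].
  { intros t Ht. pose proof (hull_right_of_chord t Ht).
    unfold line_side in *. rewrite EAx, EAy, EBx, EBy. assumption. }
  pose proof forward_initial_cross as Hcross.
  pose proof (end_left_of_initial_tangent C2 Hcv2 Hpi) as Hend. unfold line_side in Hend.
  rewrite <- EAx, <- EAy, <- EBx, <- EBy, Dx, Dy in Hend. nra.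
Qed.

Lemma forward_final_angle_le p0 : 0 <= p0 <= PI ->
  tx C1 (ca C1) = rotx (tx C2 (ca C2)) (ty C2 (ca C2)) p0 ->
  ty C1 (ca C1) = roty (tx C2 (ca C2)) (ty C2 (ca C2)) p0 ->
  p0 + turning_angle C1 (cb C1) <= turning_angle C2 (cb C2).
Proof.
  intros Hp0 R1x R1y.
  destruct (pt_eq_coords _ _ _ _ EA) as [EAx EAy].
  destruct (pt_eq_coords _ _ _ _ EB) as [EBx EBy].
  pose proof (initial_tangent_unit C2 Hc2) as Hu.
  destruct (chord_direction C2 Hcv2 Hpi) as (r & d & Hr & Hd & Hthd & HDx & HDy).
  destruct (tangent_rotation C2 Hc2 _ (in_dom_end C2 Hc2)) as [T2x T2y].
  destruct (tangent_rotation_from C1 Hc1 _ _ p0 (cb C1) (in_dom_end C1 Hc1) R1x R1y)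
    as [T1x T1y].
  pose proof (hull_right_of_chord) as Hleft. unfold line_side in Hleft.
  set (ux := tx C2 (ca C2)) in *. set (uy := ty C2 (ca C2)) in *.
  set (th := turning_angle C2 (cb C2)) in *.
  set (pb := p0 + turning_angle C1 (cb C1)) in *.
  set (Dx := cx C2 (cb C2) - cx C2 (ca C2)) in *. set (Dy := cy C2 (cb C2) - cy C2 (ca C2)) in *.
  assert (S1 : sin (p0 - d) <= 0).
  { enough (0 <= - Dx * ty C1 (ca C1) - - Dy * tx C1 (ca C1)).
    { rewrite R1x, R1y, HDx, HDy, <- (rot_cross ux uy d p0 Hu) in *. nra. }
    apply (line_side_min_start C1 Hc1 _ _ (cx C2 (ca C2)) (cy C2 (ca C2))). intros t Ht.
    specialize (Hleft t Ht). unfold line_side. rewrite EAx, EAy. lra. }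
  assert (S2 : 0 <= sin (pb - d)).
  { enough (- Dx * ty C1 (cb C1) - - Dy * tx C1 (cb C1) <= 0).
    { rewrite T1x, T1y, HDx, HDy, <- (rot_cross ux uy d pb Hu) in *. nra. }
    apply (line_side_min_end C1 Hc1 _ _ (cx C2 (ca C2)) (cy C2 (ca C2))). intros t Ht.
    specialize (Hleft t Ht). unfold line_side. rewrite EBx, EBy. fold Dx Dy.
    replace (- Dx * Dy - - Dy * Dx) with 0 by ring. lra. }
  assert (S3 : sin (pb - th) <= 0).
  { rewrite <- (rot_cross ux uy th pb Hu), <- T1x, <- T1y, <- T2x, <- T2y.
    apply (line_side_min_end C1 Hc1 _ _ (cx C2 (cb C2)) (cy C2 (cb C2))). intros t Ht.
    assert (0 <= line_side C1 (tx C2 (cb C2)) (ty C2 (cb C2)) (cx C2 (cb C2)) (cy C2 (cb C2)) t)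
      by (apply hull_line_side; auto using tangent_line_supports, in_dom_end).
    unfold line_side in *. rewrite EBx, EBy. lra. }
  pose proof (turning_angle_bounds C1 Hc1 _ (in_dom_end C1 Hc1)).
  pose proof forward_turning_lt_2PI.
  apply (angle_window p0 pb d th); try assumption; [| unfold pb; lra].
  split; [apply (turning_angle_end_pos C2 Hc2) | exact Hpi].
Qed.

Lemma forward_tangent_window : exists p0, 0 <= p0 /\
  p0 + turning_angle C1 (cb C1) <= turning_angle C2 (cb C2) /\
  forall t, in_dom C1 t ->
    tx C1 t = rotx (tx C2 (ca C2)) (ty C2 (ca C2)) (p0 + turning_angle C1 t) /\
    ty C1 t = roty (tx C2 (ca C2)) (ty C2 (ca C2)) (p0 + turning_angle C1 t).
Proof.
  destruct (unit_vector_angle _ _ _ _ (initial_tangent_unit C2 Hc2)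
              (initial_tangent_unit C1 Hc1) forward_initial_cross) as (p0 & Hp0 & R1x & R1y).
  exists p0. split; [lra | split].
  - exact (forward_final_angle_le p0 Hp0 R1x R1y).
  - intros t Ht. exact (tangent_rotation_from C1 Hc1 _ _ p0 t Ht R1x R1y).
Qed.

End ForwardEndpoints.

End TwoCurves.

(** * Comparison of the chords *)

Definition chord_dot c e1 e2 :=
  (cx c (cb c) - cx c (ca c)) * e1 + (cy c (cb c) - cy c (ca c)) * e2.

Section ChordComparison.

Variable c : curve.
Hypothesis Hc : regular_pos_curve c.
Variables e1 e2 : R.

Lemma is_RInt_chord_dot :
  is_RInt (fun t => speed c t * (tx c t * e1 + ty c t * e2)) (ca c) (cb c) (chord_dot c e1 e2).
Proof.
  pose proof (regular_dom_nonempty c Hc) as Hab.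
  apply (is_RInt_ext (fun t => dx c t * e1 + dy c t * e2)).
  { rewrite Rmin_left, Rmax_right by lra. intros t Ht.
    assert (Htd : in_dom c t) by (unfold in_dom; lra).
    change (dx c t * e1 + dy c t * e2 = speed c t * (tx c t * e1 + ty c t * e2) :> R).
    rewrite (dx_speed c Hc t Htd), (dy_speed c Hc t Htd). ring. }
  replace (chord_dot c e1 e2) with
    (minus (cx c (cb c) * e1 + cy c (cb c) * e2) (cx c (ca c) * e1 + cy c (ca c) * e2))
    by (unfold chord_dot, minus, plus, opp; simpl; ring).
  apply (is_RInt_derive (fun t => cx c t * e1 + cy c t * e2)).
  - intros t _. pose proof (is_derive_cx c Hc t) as Dx. pose proof (is_derive_cy c Hc t) as Dy.
    auto_derive; [repeat split; eexists; eassumption|].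
    rewrite (is_derive_unique_eta _ _ _ Dx), (is_derive_unique_eta _ _ _ Dy). ring.
  - intros t _. apply @continuous_plus; apply @continuous_mult;
      auto using continuous_dx, continuous_dy, continuous_const.
Qed.

Lemma is_RInt_tangent_cross :
  is_RInt (fun t => turning_rate c t * (tx c t * e1 + ty c t * e2)) (ca c) (cb c)
    ((e1 * ty c (cb c) - e2 * tx c (cb c)) - (e1 * ty c (ca c) - e2 * tx c (ca c))).
Proof.
  pose proof (regular_dom_nonempty c Hc) as Hab.
  replace (_ - _) with (minus (e1 * ty c (cb c) - e2 * tx c (cb c))
                              (e1 * ty c (ca c) - e2 * tx c (ca c)))
    by (unfold minus, plus, opp; simpl; ring).
  apply (is_RInt_derive (fun t => e1 * ty c t - e2 * tx c t));
    rewrite Rmin_left, Rmax_right by lra; intros t Ht.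
  - destruct (is_derive_tangent c Hc t Ht) as [Dx Dy].
    auto_derive; [repeat split; eexists; eassumption|].
    rewrite (is_derive_unique_eta _ _ _ Dx), (is_derive_unique_eta _ _ _ Dy). ring.
  - destruct (continuous_tangent c Hc t Ht) as [Cx Cy].
    apply @continuous_mult; [apply (continuous_turning_rate c Hc t Ht)|].
    apply @continuous_plus; apply @continuous_mult; auto using continuous_const.
Qed.

Lemma chord_dot_le_of_curvature_ge m : 0 < m ->
  (forall t, in_dom c t -> m <= curvature c t) ->
  (forall t, in_dom c t -> 0 <= tx c t * e1 + ty c t * e2) ->
  chord_dot c e1 e2 <=
    / m * ((e1 * ty c (cb c) - e2 * tx c (cb c)) - (e1 * ty c (ca c) - e2 * tx c (ca c))).
Proof.
  intros Hm Hk He. pose proof (regular_dom_nonempty c Hc) as Hab.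
  apply (is_RInt_le _ _ _ _ _ _ (Rlt_le _ _ Hab) is_RInt_chord_dot
           (is_RInt_scal _ _ _ (/ m) _ is_RInt_tangent_cross)).
  intros t Ht. assert (Htd : in_dom c t) by (unfold in_dom; lra).
  specialize (Hk t Htd). specialize (He t Htd). pose proof (speed_pos c Hc t Htd).
  unfold scal; simpl; unfold mult; simpl.
  rewrite <- (curvature_mul_speed c t).
  apply Rmult_le_reg_l with m; [assumption|].
  replace (m * (/ m * (curvature c t * speed c t * (tx c t * e1 + ty c t * e2))))
    with (curvature c t * (speed c t * (tx c t * e1 + ty c t * e2))) by (field; lra).
  apply Rmult_le_compat_r; [apply Rmult_le_pos|]; lra.
Qed.

Lemma chord_dot_ge_of_curvature_le M : 0 < M ->
  (forall t, in_dom c t -> curvature c t <= M) ->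
  (forall t, in_dom c t -> 0 <= tx c t * e1 + ty c t * e2) ->
  / M * ((e1 * ty c (cb c) - e2 * tx c (cb c)) - (e1 * ty c (ca c) - e2 * tx c (ca c)))
    <= chord_dot c e1 e2.
Proof.
  intros HM Hk He. pose proof (regular_dom_nonempty c Hc) as Hab.
  apply (is_RInt_le _ _ _ _ _ _ (Rlt_le _ _ Hab)
           (is_RInt_scal _ _ _ (/ M) _ is_RInt_tangent_cross) is_RInt_chord_dot).
  intros t Ht. assert (Htd : in_dom c t) by (unfold in_dom; lra).
  specialize (Hk t Htd). specialize (He t Htd). pose proof (speed_pos c Hc t Htd).
  unfold scal; simpl; unfold mult; simpl.
  rewrite <- (curvature_mul_speed c t).
  apply Rmult_le_reg_l with M; [assumption|].
  replace (M * (/ M * (curvature c t * speed c t * (tx c t * e1 + ty c t * e2))))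
    with (curvature c t * (speed c t * (tx c t * e1 + ty c t * e2))) by (field; lra).
  apply Rmult_le_compat_r; [apply Rmult_le_pos|]; lra.
Qed.

End ChordComparison.

Lemma chord_dot_same_endpoints c1 c2 e1 e2 :
  pt c1 (ca c1) = pt c2 (ca c2) -> pt c1 (cb c1) = pt c2 (cb c2) ->
  chord_dot c1 e1 e2 = chord_dot c2 e1 e2.
Proof.
  intros EA EB. unfold chord_dot.
  destruct (pt_eq_coords _ _ _ _ EA) as [-> ->]. destruct (pt_eq_coords _ _ _ _ EB) as [-> ->].
  reflexivity.
Qed.

Section AngleWindow.

Variable c : curve.
Hypothesis Hc : regular_pos_curve c.
Variables ux uy th p0 : R.
Hypothesis Hu : ux ^ 2 + uy ^ 2 = 1.
Hypothesis Hp0 : 0 <= p0.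
Hypothesis Hwindow : p0 + turning_angle c (cb c) <= th.
Hypothesis Hth : th <= PI.
Hypothesis Htan : forall t, in_dom c t ->
  tx c t = rotx ux uy (p0 + turning_angle c t) /\ ty c t = roty ux uy (p0 + turning_angle c t).

Lemma window_tangent_dot_nonneg t : in_dom c t ->
  0 <= tx c t * normal_diff_x ux uy th + ty c t * normal_diff_y ux uy th.
Proof.
  intros Ht. destruct (Htan t Ht) as [-> ->]. rewrite normal_diff_dot_rot by exact Hu.
  pose proof (turning_angle_bounds c Hc t Ht).
  assert (0 <= sin (p0 + turning_angle c t)) by (apply sin_ge_0; lra).
  assert (0 <= sin (th - (p0 + turning_angle c t))) by (apply sin_ge_0; lra).
  lra.
Qed.

Lemma window_tangent_cross_increment :
  let e1 := normal_diff_x ux uy th in let e2 := normal_diff_y ux uy th in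
  (e1 * ty c (cb c) - e2 * tx c (cb c)) - (e1 * ty c (ca c) - e2 * tx c (ca c)) =
  (cos (th - (p0 + turning_angle c (cb c))) - cos (p0 + turning_angle c (cb c)))
  - (cos (th - p0) - cos p0).
Proof.
  intros e1 e2.
  destruct (Htan _ (in_dom_start c Hc)) as [-> ->].
  destruct (Htan _ (in_dom_end c Hc)) as [-> ->].
  unfold e1, e2. rewrite !normal_diff_cross_rot, turning_angle_start, Rplus_0_r by exact Hu.
  reflexivity.
Qed.

Lemma chord_dot_window_le m : 0 < m -> (forall t, in_dom c t -> m <= curvature c t) ->
  chord_dot c (normal_diff_x ux uy th) (normal_diff_y ux uy th) <= / m * (2 - 2 * cos th).
Proof.
  intros Hm Hk.
  eapply Rle_trans;
    [apply (chord_dot_le_of_curvature_ge c Hc _ _ m Hm Hk), window_tangent_dot_nonneg|].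
  rewrite window_tangent_cross_increment.
  apply Rmult_le_compat_l; [apply Rlt_le, Rinv_0_lt_compat, Hm|].
  pose proof (turning_angle_bounds c Hc _ (in_dom_end c Hc)).
  apply cos_window_increment_le; lra.
Qed.

End AngleWindow.

Lemma chord_dot_full_turn_ge c M : regular_pos_curve c -> 0 < M ->
  (forall t, in_dom c t -> curvature c t <= M) -> turning_angle c (cb c) <= PI ->
  let ux := tx c (ca c) in let uy := ty c (ca c) in let th := turning_angle c (cb c) in
  / M * (2 - 2 * cos th) <= chord_dot c (normal_diff_x ux uy th) (normal_diff_y ux uy th).
Proof.
  intros Hc HM Hk Hpi ux uy th.
  assert (Htan : forall t, in_dom c t ->
    tx c t = rotx ux uy (0 + turning_angle c t) /\ ty c t = roty ux uy (0 + turning_angle c t)).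
  { intros t Ht. rewrite Rplus_0_l. apply tangent_rotation; assumption. }
  pose proof (initial_tangent_unit c Hc) as Hu.
  eapply Rle_trans; [|apply (chord_dot_ge_of_curvature_le c Hc _ _ M HM Hk)].
  - rewrite (window_tangent_cross_increment c Hc ux uy th 0 Hu Htan), Rplus_0_l, !Rminus_0_r,
      Rminus_diag, cos_0.
    right. unfold th. ring.
  - apply (window_tangent_dot_nonneg c Hc ux uy th 0); auto using Rle_refl.
    unfold th. lra.
Qed.

Lemma le_of_inv_mul_le m M q : 0 < m -> 0 < M -> 0 < q -> / M * q <= / m * q -> m <= M.
Proof.
  intros Hm HM Hq Hle.
  apply Rmult_le_reg_r in Hle; [|exact Hq].
  rewrite <- (Rinv_inv m), <- (Rinv_inv M).
  apply Rinv_le_contravar; [apply Rinv_0_lt_compat, HM | exact Hle].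
Qed.

Theorem lemma4p5 (C1 C2 : curve) :
  convex_curve C1 -> convex_curve C2 ->
  same_endpoints C1 C2 ->
  (forall p, trace C1 p -> convex_hull (trace C2) p) ->
  total_curvature C2 <= PI ->
  forall M m, is_max_on C2 (curvature C2) M -> is_min_on C1 (curvature C1) m ->
  m <= M.
Proof.
  intros Hcv1 Hcv2 Hends Hhull Htot M m [[tM [HtM EM]] HM] [[tm [Htm Em]] Hm].
  pose proof (proj1 Hcv1) as Hc1. pose proof (proj1 Hcv2) as Hc2.
  rewrite (total_curvature_eq C2 Hc2) in Htot.
  destruct Hends as [[EA EB] | [EA EB]];
    [| destruct (reversed_endpoints_impossible C1 C2 Hcv1 Hcv2 Htot Hhull EA EB)].
  destruct (forward_tangent_window C1 C2 Hcv1 Hcv2 Htot Hhull EA EB)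
    as (p0 & Hp0 & Hwindow & Htan).
  assert (HM0 : 0 < M) by (rewrite <- EM; apply (curvature_pos C2 Hc2 tM HtM)).
  assert (Hm0 : 0 < m) by (rewrite <- Em; apply (curvature_pos C1 Hc1 tm Htm)).
  pose proof (chord_dot_full_turn_ge C2 M Hc2 HM0 HM Htot) as Hlower.
  pose proof (chord_dot_window_le C1 Hc1 _ _ _ p0 (initial_tangent_unit C2 Hc2) Hp0 Hwindow
                Htot Htan m Hm0 Hm) as Hupper.
  rewrite (chord_dot_same_endpoints C1 C2 _ _ EA EB) in Hupper.
  assert (Hgap : 0 < 2 - 2 * cos (turning_angle C2 (cb C2))).
  { pose proof (turning_angle_end_pos C2 Hc2) as Hth.
    pose proof (cos_decreasing_1 0 _ (Rle_refl 0) (Rlt_le _ _ PI_RGT_0) (Rlt_le _ _ Hth) Htot Hth).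
    rewrite cos_0 in *. lra. }
  apply (le_of_inv_mul_le _ _ _ Hm0 HM0 Hgap). simpl in Hlower. lra.
Qed.
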